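(* Let $q$ be a prime power and let $\ell\ge 2$. There is a constant $c_\ell>0$ depending only on $\ell$ such that the following holds. Let $n\le m$ and let $C\subseteq\mathbb{F}_{q^m}^n$ be an MRD code of rate $R$ that is $\big(\frac{\ell(1-R)}{\ell+1},\ell\big)$-average-radius list decodable in the rank metric. Then $m\ge c_\ell\,(nR-1)(n-\ell-nR+1)$. In particular, if $R\in[c,\,1-c-\ell/n]$ for some constant $c>0$, then $m=\Omega_{\ell,c}(n^2)$.
   Context: For $\bm{v}=(v_1,\dots,v_n)\in\mathbb{F}_{q^m}^n$, $\mathrm{rank}_{\mathbb{F}_q}(\bm{v})=\dim_{\mathbb{F}_q}\mathrm{span}_{\mathbb{F}_q}\{v_1,\dots,v_n\}$ (equivalently the rank of $\bm{v}$ viewed as an $m\times n$ matrix over $\mathbb{F}_q$) and $d_R(\bm{u},\bm{v})=\mathrm{rank}_{\mathbb{F}_q}(\bm{u}-\bm{v})$. A code is a subset $C\subseteq\mathbb{F}_{q^m}^n$; its rate is $R=\log_q|C|/(nm)$ and its minimum distance $d$ is the minimum of $d_R$ over distinct codewords. $C$ is MRD if it attains the Singleton bound, i.e. $|C|=q^{m(n-d+1)}$. $C$ is $(\rho,\ell)$-average-radius list decodable if for every $\bm{y}\in\mathbb{F}_{q^m}^n$ and every $\ell+1$ distinct codewords $\bm{c}_0,\dots,\bm{c}_\ell$, $\frac{1}{\ell+1}\sum_{i=0}^\ell d_R(\bm{y},\bm{c}_i)>\rho n$. *)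

From HB Require Import structures.
From mathcomp Require Import all_boot all_order all_algebra all_field.
From mathcomp Require Import reals exp.
Set Implicit Arguments. Unset Strict Implicit. Unset Printing Implicit Defensive.
Import Order.TTheory GRing.Theory Num.Theory.
Local Open Scope ring_scope.

(* F plays F_q, L : fieldExtType F plays F_{q^m} with m = \dim {:L};
   codewords are row vectors in L^n. *)

Definition rk_vec {F : fieldType} {L : fieldExtType F} {n : nat}
  (v : 'rV[L]_n) : nat :=
  \dim <<[seq v ord0 i | i <- enum 'I_n]>>%VS.

Definition dR {F : fieldType} {L : fieldExtType F} {n : nat}
  (u v : 'rV[L]_n) : nat := rk_vec (u - v).

(* A code is a finite set of codewords, given as a duplicate-free list. *)
Definition min_dist {F : fieldType} {L : fieldExtType F} {n : nat}
  (C : seq 'rV[L]_n) (d : nat) : Prop :=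
  (exists u v, [/\ u \in C, v \in C, u != v & dR u v = d]) /\
  (forall u v, u \in C -> v \in C -> u != v -> (d <= dR u v)%N).

Definition is_MRD {F : finFieldType} {L : fieldExtType F} {n : nat}
  (C : seq 'rV[L]_n) : Prop :=
  exists d, min_dist C d /\ size C = (#|F| ^ (\dim {:L} * (n - d + 1)))%N.

Definition rate (R : realType) {F : finFieldType} {L : fieldExtType F} {n : nat}
  (C : seq 'rV[L]_n) : R :=
  ln ((size C)%:R) / ln (#|F|%:R) / (n * \dim {:L})%:R.

Definition avg_list_decodable (R : realType) {F : fieldType} {L : fieldExtType F}
  {n : nat} (C : seq 'rV[L]_n) (rho : R) (l : nat) : Prop :=
  forall (y : 'rV[L]_n) (c : 'I_l.+1 -> 'rV[L]_n),
    injective c -> (forall i, c i \in C) ->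
    (l.+1%:R)^-1 * (\sum_(i < l.+1) (dR y (c i))%:R) > rho * n%:R.

From HB Require Import structures.
From mathcomp Require Import all_boot all_order all_algebra all_field.
From mathcomp Require Import reals exp.
From mathcomp Require Import ring lra zify.
Set Implicit Arguments. Unset Strict Implicit. Unset Printing Implicit Defensive.
Import Order.TTheory GRing.Theory Num.Theory VectorInternalTheory.
Local Open Scope ring_scope.

(* Write n = p + d with d = 2 + e the minimum distance, fix c0 in C, and for
   an F_q-matrix A of size d x p call head + tail A the A-syndrome of
   x = (head | tail) in L^(p + d).  Two codewords whose offsets from c0 have
   equal A-syndrome and equal first tail coordinate differ by a vector of
   rank < d, so by |C| = q^(m (p + 1)) every value of this pair is attained.
   For each A and nonzero t in L this yields a codeword w(A, t) != c0 whose
   offset has A-syndrome 0 and first tail coordinate t; the rank bound makes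
   the tail of the offset free over F_q, so it determines A and w is
   injective.  Keeping only the first two tail coordinates of the offset
   gives a point y with rk (y - c0) <= 2 and rk (y - w) <= e, and y depends
   only on the first two rows of A and those two coordinates, which take at
   most q^(2p + 2m) values.  If q^(dp) (q^m - 1) > (l - 1) q^(2p + 2m), then
   l of the w share their y, and with c0 they are within total distance
   2 + l e <= l (d - 1) of y, against average-radius list decodability.
   Hence e p <= l - 1 + m, and since n R = p + 1 this gives
   (n R - 1)(n - l - n R + 1) = p (d - l) <= 2 m. *)

Section RankMetric.
Variables (F : fieldType) (L : fieldExtType F).

Definition entry_span n (v : 'rV[L]_n) : {vspace L} :=
  <<[seq v ord0 i | i <- enum 'I_n]>>%VS.

Lemma memv_entry_span n (v : 'rV[L]_n) i : v ord0 i \in entry_span v.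
Proof. by apply: memv_span; apply: map_f; rewrite mem_enum. Qed.

Lemma rk_vec_leq_dim n (v : 'rV[L]_n) (U : {vspace L}) :
  (forall i, v ord0 i \in U) -> (rk_vec v <= \dim U)%N.
Proof. by move=> vU; apply/dimvS/span_subvP => _ /mapP[i _ ->]. Qed.

Lemma rk_vec_leq n (v : 'rV[L]_n) : (rk_vec v <= n)%N.
Proof. by rewrite (leq_trans (dim_span _)) // size_map size_enum_ord. Qed.

Lemma rk_vec0 n : rk_vec (0 : 'rV[L]_n) = 0%N.
Proof.
apply/eqP; rewrite -leqn0 (leq_trans (rk_vec_leq_dim (U := 0%VS) _)) ?dimv0 //.
by move=> i; rewrite mxE mem0v.
Qed.

Lemma rk_vecN n (v : 'rV[L]_n) : rk_vec (- v) = rk_vec v.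
Proof.
apply/eqP; rewrite eqn_leq; apply/andP; split; apply: rk_vec_leq_dim => i.
  by rewrite mxE memvN memv_entry_span.
by have := memv_entry_span (- v) i; rewrite mxE memvN.
Qed.

Lemma rk_vec_row_mx n1 n2 (u : 'rV[L]_n1) (v : 'rV[L]_n2) :
  (rk_vec (row_mx u v) <= rk_vec u + rk_vec v)%N.
Proof.
rewrite (leq_trans (rk_vec_leq_dim (U := entry_span u + entry_span v) _)) //.
  by move=> i; rewrite mxE; case: splitP => j _;
    [apply/(subvP (addvSl _ _)) | apply/(subvP (addvSr _ _))];
    exact: memv_entry_span.
exact: dimv_add_leqif.
Qed.

Lemma rk_vec_lt n (v : 'rV[L]_n) i : v ord0 i = 0 -> (rk_vec v < n)%N.
Proof.
move=> vi0; have n_gt0 : (0 < n)%N by case: n v i {vi0} => [|n] ? [].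
pose U := <<[seq v ord0 j | j <- enum (predC1 i)]>>%VS.
have dimU : (\dim U <= n.-1)%N.
  by rewrite (leq_trans (dim_span _)) // size_map -cardE cardC1 card_ord.
apply: leq_ltn_trans (leq_trans (rk_vec_leq_dim _) dimU) _; last first.
  by rewrite ltn_predL.
move=> j; have [->|ji] := eqVneq j i; first by rewrite vi0 mem0v.
by apply: memv_span; apply: map_f; rewrite mem_enum.
Qed.

Definition alg_mx m n (A : 'M[F]_(m, n)) : 'M[L]_(m, n) := map_mx (in_alg L) A.

Lemma mul_alg_mxE m k n (M : 'M[L]_(m, k)) (A : 'M[F]_(k, n)) i j :
  (M *m alg_mx A) i j = \sum_l A l j *: M i l.
Proof. by rewrite mxE; apply: eq_bigr => l _; rewrite mxE mulr_algr. Qed.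

Lemma alg_mx_col_mx k1 k2 n (B : 'M[F]_(k1, n)) (D : 'M[F]_(k2, n)) :
  alg_mx (col_mx B D) = col_mx (alg_mx B) (alg_mx D).
Proof. exact: map_col_mx. Qed.

Lemma memv_mul_alg_mx k n (t : 'rV[L]_k) (A : 'M[F]_(k, n)) j :
  (t *m alg_mx A) ord0 j \in entry_span t.
Proof.
by rewrite mul_alg_mxE; apply: memv_suml => i _; rewrite memvZ ?memv_entry_span.
Qed.

Lemma mul_alg_mx_inj k n (t : 'rV[L]_k) (A B : 'M[F]_(k, n)) :
  (k <= rk_vec t)%N -> t *m alg_mx A = t *m alg_mx B -> A = B.
Proof.
move=> rk_t eqAB; pose z := [tuple t ord0 i | i < k].
have free_z : free z.
  by rewrite /free eqn_leq dim_span size_tuple (leq_trans rk_t).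
apply/matrixP => i j; apply/eqP; rewrite -subr_eq0; apply/eqP.
move: i; apply: (freeP free_z (fun i => A i j - B i j)).
have /eqP := congr1 (fun M : 'rV[L]_n => M ord0 j) eqAB.
rewrite !mul_alg_mxE -subr_eq0 -sumrB => /eqP sum0.
rewrite -[RHS]sum0; apply: eq_bigr => i _.
by rewrite (nth_mktuple _ 0) scalerBl.
Qed.

Definition syndrome p k (A : 'M[F]_(k, p)) (x : 'rV[L]_(p + k)) : 'rV[L]_p :=
  lsubmx x + rsubmx x *m alg_mx A.

Definition lift_tail p k (A : 'M[F]_(k, p)) (t : 'rV[L]_k) : 'rV[L]_(p + k) :=
  row_mx (- (t *m alg_mx A)) t.

Lemma syndromeB p k (A : 'M[F]_(k, p)) x y :
  syndrome A (x - y) = syndrome A x - syndrome A y.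
Proof. by rewrite /syndrome !linearB /= mulmxBl addrACA opprD. Qed.

Lemma syndrome_eq0 p k (A : 'M[F]_(k, p)) x :
  syndrome A x = 0 -> x = lift_tail A (rsubmx x).
Proof.
by move/eqP; rewrite addr_eq0 => /eqP xl; rewrite /lift_tail -xl hsubmxK.
Qed.

Lemma lsubmx_lift_tail p k (A : 'M[F]_(k, p)) t :
  lsubmx (lift_tail A t) = - (t *m alg_mx A).
Proof. exact: row_mxKl. Qed.

Lemma rk_vec_lift_tail p k (A : 'M[F]_(k, p)) t :
  (rk_vec (lift_tail A t) <= rk_vec t)%N.
Proof.
apply: rk_vec_leq_dim => i; rewrite mxE; case: splitP => j _.
  by rewrite mxE memvN memv_mul_alg_mx.
exact: memv_entry_span.
Qed.

Lemma lift_tail_row_mx p k1 k2 (B : 'M[F]_(k1, p)) (D : 'M[F]_(k2, p)) s r :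
  lift_tail (col_mx B D) (row_mx s r) =
  lift_tail (col_mx B 0) (row_mx s 0) + lift_tail (col_mx B D) (row_mx 0 r).
Proof.
rewrite /lift_tail !alg_mx_col_mx !mul_row_col !mul0mx.
by rewrite add_row_mx add_row_mx addr0 add0r opprD addr0 add0r.
Qed.

End RankMetric.

Section MRDCode.
Variables (F : finFieldType) (L : fieldExtType F).

Definition fin_rV n (v : 'rV[L]_n) : 'M[F]_(n, dim L) :=
  \matrix_i v2r (v ord0 i).

Definition rV_fin n (M : 'M[F]_(n, dim L)) : 'rV[L]_n := \row_i r2v (row i M).

Lemma fin_rVK n : cancel (@fin_rV n) (@rV_fin n).
Proof. by move=> v; apply/rowP => i; rewrite mxE rowK v2rK. Qed.

Variables (p k : nat) (C : seq 'rV[L]_(p + k)).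
Hypotheses (C_uniq : uniq C)
  (C_dist : forall u v, u \in C -> v \in C -> u != v -> (k <= dR u v)%N)
  (C_size : size C = (#|F| ^ (\dim {:L} * p.+1))%N).

Lemma MRD_syndrome_onto c0 (A : 'M[F]_(k, p)) i0 (t : L) :
  exists w, [&& w \in C, syndrome A (w - c0) == 0 &
                (w - c0) ord0 (rshift p i0) == t].
Proof.
pose T := ('M[F]_(p, dim L) * 'rV[F]_(dim L))%type.
pose f w : T :=
  (fin_rV (syndrome A (w - c0)), v2r ((w - c0) ord0 (rshift p i0))).
have f_inj : {in C &, injective f}.
  move=> u v uC vC [/(can_inj (@fin_rVK _)) eq_syn /v2r_inj].
  rewrite !mxE => /addIr eq_i0; apply/eqP; apply: contraT => uv.
  have uvE : u - v = (u - c0) - (v - c0) by rewrite opprB addrA subrK.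
  have /syndrome_eq0 uv_lift : syndrome A (u - v) = 0.
    by rewrite uvE syndromeB eq_syn subrr.
  have := C_dist uC vC uv; rewrite /dR uv_lift leqNgt.
  rewrite (leq_ltn_trans (rk_vec_lift_tail _ _)) // (rk_vec_lt (i := i0)) //.
  by rewrite !mxE eq_i0 subrr.
suff /mapP[w wC [syn0 wi0]] : (fin_rV 0, v2r t) \in map f C.
  exists w; rewrite wC (can_inj (@fin_rVK _) syn0) eq_sym (v2r_inj wi0) /=.
  by rewrite !eqxx.
apply: contraT => t_notin.
have : (size ((fin_rV 0, v2r t) :: map f C) <= #|{: T}|)%N.
  rewrite cardE uniq_leq_size //= ?t_notin ?map_inj_in_uniq //.
  by move=> y; rewrite mem_enum.
rewrite /= size_map C_size card_prod !card_mx -expnD dimvf mul1n.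
by rewrite mulnS addnC mulnC ltnn.
Qed.

End MRDCode.

Lemma pigeonhole_fiber (T K : finType) (f : T -> K) (A : {set T}) n :
  (n * #|K| < #|A|)%N -> exists y, (n < #|[set x in A | f x == y]|)%N.
Proof.
move=> nKA; apply/existsP; apply: contraLR nKA => /existsPn small.
rewrite -leqNgt -sum1_card (partition_big f predT) //= mulnC -sum_nat_const.
apply: leq_sum => y _; have := small y; rewrite -leqNgt; apply: leq_trans.
by rewrite sum1_card; apply/eq_leq/eq_card => x; rewrite inE.
Qed.

Lemma enum_injective (T : finType) (A : {set T}) n :
  (n <= #|A|)%N -> exists2 g : 'I_n -> T, injective g & forall j, g j \in A.
Proof.
move=> nA; exists (fun j => enum_val (widen_ord nA j)) => [j j'|j].
  by move=> /enum_val_inj [] /val_inj.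
exact: enum_valP.
Qed.

Lemma expn_pred_leq q a b m n : (1 < q)%N -> (0 < m)%N ->
  (q ^ a * (q ^ m).-1 <= n * q ^ b)%N -> (a + m <= n + b)%N.
Proof.
move=> q_gt1 m_gt0 bound; have q_gt0 := ltnW q_gt1.
have pow_pred : (q ^ m.-1 <= (q ^ m).-1)%N.
  rewrite -ltnS prednK ?expn_gt0 ?q_gt0 // -{2}(prednK m_gt0) expnS.
  by rewrite ltn_Pmull // expn_gt0 q_gt0.
rewrite -(prednK m_gt0) addnS -(ltn_exp2l _ _ q_gt1) !expnD.
apply: leq_ltn_trans (leq_mul (leqnn _) pow_pred) _.
by rewrite (leq_ltn_trans bound) // ltn_pmul2r ?expn_gt0 ?q_gt0 // ltn_expl.
Qed.

Section ListDecodingCount.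
Variables (F : finFieldType) (L : fieldExtType F) (p e l : nat).
Variables (C : seq 'rV[L]_(p + (2 + e))) (c0 : 'rV[L]_(p + (2 + e))).
Hypotheses (l_ge2 : (2 <= l)%N) (C_uniq : uniq C) (c0_C : c0 \in C)
  (C_dist : forall u v, u \in C -> v \in C -> u != v -> (2 + e <= dR u v)%N)
  (C_size : size C = (#|F| ^ (\dim {:L} * p.+1))%N)
  (C_dec : forall y (c : 'I_l.+1 -> 'rV[L]_(p + (2 + e))), injective c ->
     (forall i, c i \in C) -> (l * e.+1 < \sum_i dR y (c i))%N).

Lemma list_decoding_no_center y (c : 'I_l -> 'rV[L]_(p + (2 + e))) :
  injective c -> (forall j, c j \in C) -> (forall j, c j != c0) ->
  (dR y c0 <= 2)%N -> (forall j, dR y (c j) <= e)%N -> False.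
Proof.
move=> c_inj c_C c_c0 y_c0 y_c.
pose c' (i : 'I_l.+1) := if unlift ord0 i is Some j then c j else c0.
have c'_inj : injective c'.
  move=> i1 i2; rewrite /c'.
  case: (unliftP ord0 i1) => [j1|] ->; case: (unliftP ord0 i2) => [j2|] ->;
    rewrite ?liftK ?unlift_none //.
  - by move/c_inj ->.
  - by move/eqP; rewrite (negbTE (c_c0 j1)).
  - by move/esym/eqP; rewrite (negbTE (c_c0 j2)).
have c'_C i : c' i \in C by rewrite /c'; case: (unlift ord0 i).
have := C_dec y c'_inj c'_C; apply/negP.
rewrite -leqNgt big_ord_recl /c' unlift_none; under eq_bigr do rewrite liftK.
have sum_le : (\sum_(j < l) dR y (c j) <= \sum_(j < l) e)%N.
  by apply: leq_sum => j _.
rewrite (leq_trans (leq_add y_c0 sum_le)) //.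
by rewrite sum_nat_const card_ord mulnS leq_add2r.
Qed.

Let params := ('M[F]_(2 + e, p) * 'rV[F]_(dim L))%type.

Let i0 : 'I_(2 + e) := lshift e ord0.

Let codeword (th : params) : 'rV[L]_(p + (2 + e)) :=
  xchoose (MRD_syndrome_onto C_uniq C_dist C_size c0 th.1 i0 (r2v th.2)).

Let offset th := codeword th - c0.

Lemma codeword_spec th :
  [/\ codeword th \in C, offset th = lift_tail th.1 (rsubmx (offset th))
    & offset th ord0 (rshift p i0) = r2v th.2].
Proof.
have /and3P[cw_C /eqP syn0 /eqP off_i0] := xchooseP
  (MRD_syndrome_onto C_uniq C_dist C_size c0 th.1 i0 (r2v th.2)).
by split=> //; apply: syndrome_eq0.
Qed.

Let S := setX [set: 'M[F]_(2 + e, p)] [set~ (0 : 'rV[F]_(dim L))].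

Lemma codeword_neq_c0 th : th \in S -> codeword th != c0.
Proof.
case: th => A a; rewrite in_setX !inE /=; apply: contra => /eqP cw_c0.
have [_ _] := codeword_spec (A, a).
rewrite /offset cw_c0 subrr mxE => /(congr1 v2r).
by rewrite r2vK linear0 => ->.
Qed.

Lemma codeword_inj : {in S &, injective codeword}.
Proof.
move=> th th' thS th'S eq_cw.
have [cw_C off_lift off_i0] := codeword_spec th.
have [_ off'_lift off'_i0] := codeword_spec th'.
have off_eq : offset th' = offset th by rewrite /offset eq_cw.
have rk_tail : (2 + e <= rk_vec (rsubmx (offset th)))%N.
  apply: leq_trans (C_dist cw_C c0_C (codeword_neq_c0 thS)) _.
  by rewrite /dR -/(offset th) {1}off_lift rk_vec_lift_tail.
have eq1 : th.1 = th'.1.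
  apply: (mul_alg_mx_inj rk_tail); apply: oppr_inj.
  by rewrite -lsubmx_lift_tail -off_lift -off_eq {1}off'_lift lsubmx_lift_tail.
have eq2 : th.2 = th'.2.
  by apply: (can_inj r2vK); rewrite -off_i0 -off'_i0 off_eq.
by rewrite [th]surjective_pairing [th']surjective_pairing eq1 eq2.
Qed.

Let key (th : params) : 'M[F]_(2, p) * 'M[F]_(2, dim L) :=
  (usubmx th.1, fin_rV (lsubmx (rsubmx (offset th)))).

Let center (kk : 'M[F]_(2, p) * 'M[F]_(2, dim L)) : 'rV[L]_(p + (2 + e)) :=
  c0 + lift_tail (col_mx kk.1 0) (row_mx (rV_fin kk.2) 0).

Lemma dR_center_c0 kk : (dR (center kk) c0 <= 2)%N.
Proof.
rewrite /dR /center addrC addKr (leq_trans (rk_vec_lift_tail _ _)) //.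
by rewrite (leq_trans (rk_vec_row_mx _ _)) // rk_vec0 addn0 rk_vec_leq.
Qed.

Lemma dR_center_codeword th : (dR (center (key th)) (codeword th) <= e)%N.
Proof.
have [_ off_lift _] := codeword_spec th.
set t := rsubmx (offset th) in off_lift *.
have offE : offset th =
    lift_tail (col_mx (usubmx th.1) 0) (row_mx (lsubmx t) 0)
    + lift_tail th.1 (row_mx 0 (rsubmx t)).
  rewrite {1}off_lift -[in LHS](vsubmxK th.1) -[in LHS](hsubmxK t).
  by rewrite lift_tail_row_mx vsubmxK.
rewrite /dR /center /= fin_rVK -/t -[codeword th](subrK c0) -/(offset th) offE.
rewrite -[X in _ - X]addrA addrKA [X in _ - X]addrC opprD addNKr rk_vecN.
rewrite (leq_trans (rk_vec_lift_tail _ _)) //.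
by rewrite (leq_trans (rk_vec_row_mx _ _)) // rk_vec0 rk_vec_leq.
Qed.

Lemma MRD_list_decoding_count :
  (#|F| ^ ((2 + e) * p) * (#|F| ^ \dim {:L}).-1
     <= l.-1 * (#|F| ^ (2 * p) * #|F| ^ (2 * \dim {:L})))%N.
Proof.
rewrite dimvf.
have card_S : #|S| = (#|F| ^ ((2 + e) * p) * (#|F| ^ dim L).-1)%N.
  by rewrite cardsX cardsT cardsC1 !card_mx mul1n.
rewrite -card_S -(card_mx F 2 p) -(card_mx F 2 (dim L)) -card_prod leqNgt.
apply/negP => /(pigeonhole_fiber key) [kk].
rewrite prednK ?(ltnW l_ge2) // => /enum_injective [g g_inj g_fiber].
have g_S j : g j \in S by have := g_fiber j; rewrite inE => /andP[].
have key_g j : key (g j) = kk.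
  by have := g_fiber j; rewrite inE => /andP[_ /eqP].
apply: (list_decoding_no_center (y := center kk) (c := codeword \o g))
  => [j j'|j|j||j] /=.
- by move/(codeword_inj (g_S j) (g_S j')); apply: g_inj.
- by have [] := codeword_spec (g j).
- exact: codeword_neq_c0.
- exact: dR_center_c0.
- by rewrite -(key_g j) dR_center_codeword.
Qed.

Lemma MRD_list_decoding_bound : (e * p <= l.-1 + \dim {:L})%N.
Proof.
have m_gt0 : (0 < \dim {:L})%N := adim_gt0 {:L}%AS.
have := MRD_list_decoding_count; rewrite -expnD.
by move/(expn_pred_leq (card_finNzRing_gt1 F) m_gt0); lia.
Qed.

End ListDecodingCount.

Lemma rate_size (R : realType) (F : finFieldType) (L : fieldExtType F) n
    (C : seq 'rV[L]_n) s :
  (0 < n)%N -> size C = (#|F| ^ (\dim {:L} * s))%N -> n%:R * rate R C = s%:R.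
Proof.
move=> n_gt0 C_size; have q_gt1 := card_finNzRing_gt1 F.
rewrite /rate C_size natrX lnXn ?ltr0n ?(ltnW q_gt1) // -mulr_natr !natrM.
have lnq_neq0 : ln (#|F|%:R : R) != 0 by rewrite gt_eqF // ln_gt0 // ltr1n.
by field; rewrite lnq_neq0 !gt_eqF ?ltr0n ?adim_gt0.
Qed.

Lemma avg_list_decodable_sum (R : realType) (F : fieldType) (L : fieldExtType F)
    n (C : seq 'rV[L]_n) l (r : R) d :
  (0 < d <= n)%N -> n%:R * r = (n - d).+1%:R ->
  avg_list_decodable C (l%:R * (1 - r) / l.+1%:R) l ->
  forall y (c : 'I_l.+1 -> 'rV[L]_n), injective c -> (forall i, c i \in C) ->
    (l * d.-1 < \sum_i dR y (c i))%N.
Proof.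
move=> /andP[d_gt0 d_le_n] nr dec y c c_inj c_C; have := dec y c c_inj c_C.
have -> : l%:R * (1 - r) / l.+1%:R * n%:R = (l * d.-1)%:R / l.+1%:R :> R.
  have dE : d.-1%:R = n%:R - n%:R * r :> R.
    by rewrite nr (_ : (n - d).+1 = n - d.-1)%N ?natrB; [lra | lia | lia].
  by rewrite natrM dE; field; rewrite addrC natr1 pnatr_eq0.
by rewrite -natr_sum [X in _ < X]mulrC ltr_pM2r ?invr_gt0 ?ltr0n // ltr_nat.
Qed.

Lemma row_neq_gt0 (V : nmodType) n (u v : 'rV[V]_n) : u != v -> (0 < n)%N.
Proof. by case: n u v => // u v; rewrite [u]thinmx0 [v]thinmx0 eqxx. Qed.

Theorem theoremA1 (R : realType) (l : nat) : (2 <= l)%N ->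
  exists c : R, 0 < c /\
  forall (F : finFieldType) (L : fieldExtType F) (n : nat) (C : seq 'rV[L]_n),
    (n <= \dim {:L})%N -> uniq C -> is_MRD C ->
    avg_list_decodable C (l%:R * (1 - rate R C) / l.+1%:R) l ->
    c * (n%:R * rate R C - 1) * (n%:R - l%:R - n%:R * rate R C + 1)
      <= (\dim {:L})%:R.
Proof.
move=> l_ge2; exists 2^-1; split=> [|F L n C n_le_m C_uniq].
  by rewrite invr_gt0 ltr0n.
move=> [d [[[u [v [uC vC uv duv]]] C_dist] C_size]] C_dec.
have d_le_n : (d <= n)%N by rewrite -duv rk_vec_leq.
have nR : n%:R * rate R C = (n - d).+1%:R.
  by apply: rate_size (row_neq_gt0 uv) _; rewrite C_size addn1.
rewrite nR -[(n - d).+1%:R]natr1 addrK.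
have -> : n%:R - l%:R - ((n - d)%:R + 1) + 1 = d%:R - l%:R :> R.
  by rewrite natrB //; lra.
have [d_le_l | l_lt_d] := leqP d l.
  apply: le_trans (ler0n _ _); apply: mulr_ge0_le0.
    by rewrite mulr_ge0 ?invr_ge0.
  by rewrite subr_le0 ler_nat.
have d_range : (0 < d <= n)%N by rewrite d_le_n (leq_ltn_trans _ l_lt_d).
have C_dec' := avg_list_decodable_sum d_range nR C_dec.
have [e de] : exists e, d = (2 + e)%N by exists (d - 2)%N; lia.
have [p np] : exists p, n = (p + d)%N by exists (n - d)%N; lia.
clear duv; subst d n.
have C_size' : size C = (#|F| ^ (\dim {:L} * p.+1))%N.
  by rewrite C_size addnK addn1.
have := MRD_list_decoding_bound l_ge2 C_uniq uC C_dist C_size' C_dec'.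
rewrite addnK -natrB ?(ltnW l_lt_d) // -mulrA -natrM => bound.
have : (p * (2 + e - l) <= 2 * \dim {:L})%N by nia.
by rewrite -(ler_nat R) [(2 * _)%:R]natrM; lra.
Qed.
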